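(* Consider the Robust protocol with parameters $k,\varepsilon,c$ (described in the context) and a single round of it that starts at event count $n_0$. Let $R$ be the number of events in the round and, for an event count $n$, let $\hat n$ denote the server's estimate when the event count is $n$. Then \[ \Pr\!\left[\max_{n\in[n_0,\,n_0+R-1]}\frac{|n-\hat n|}{n}>\varepsilon\right]\le 2\exp\!\left(-\min\!\left\{\frac{c^2}{8},\frac{c\sqrt k}{4}\right\}\right). \]
   Context: Distributed counting: a server and $k$ sites; events arrive one at a time, each at some site; $n_i$ is the number of events at site $i$ so far and the event count is $n=\sum_in_i$. Robust protocol with parameters $k$, $\varepsilon>0$, $c\ge1$: each site $i$ keeps a transmission probability $p$ (initially $1$, updated by server broadcasts) and its count $n_i$. On each event at site $i$: $n_i\gets n_i+1$, and independently with probability $p$ the site sends ReportSample to the server. On receiving CountRequest, site $i$ sends its current $n_i$. The server keeps a counter $B=0$, values $\bar n_i=0$, and $p=1$; its estimate is $\hat n=\bar n+B/p$ with $\bar n=\sum_i\bar n_i$. On receiving ReportSample the server sets $B\gets B+1$; if now $B=k$, the round ends and a new round begins: the server broadcasts CountRequest, sets each $\bar n_i$ to the reported exact $n_i$, sets $p\gets\min\{1,c\sqrt k/(\varepsilon\bar n)\}$, broadcasts $p$, and sets $B\gets0$. The probability is over the protocol's randomness during the round. *)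

From HB Require Import structures.
From mathcomp Require Import all_boot all_order all_algebra.
From mathcomp Require Import reals sequences exp.
Set Implicit Arguments. Unset Strict Implicit. Unset Printing Implicit Defensive.
Import Order.TTheory GRing.Theory Num.Theory.
Local Open Scope ring_scope.

(* Transmission probability used during a round that starts at event count n0:
   the server sets p = min{1, c sqrt k / (eps * nbar)} with nbar = n0 the exact
   count at the start of the round; the very first round (n0 = 0) uses the
   initial value p = 1. *)
Definition round_p {R : realType} (k : nat) (eps c : R) (n0 : nat) : R :=
  if n0 == 0%N then 1 else Num.min 1 (c * Num.sqrt (k%:R) / (eps * n0%:R)).

(* Outcomes of the first N coin flips of the round: w i = true iff the
   (i+1)-th event of the round triggers a ReportSample. *)
Definition coin_weight {R : realType} (p : R) (N : nat) (w : {ffun 'I_N -> bool}) : R :=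
  \prod_(i < N) (if w i then p else 1 - p).

Definition samples (N : nat) (w : {ffun 'I_N -> bool}) (m : nat) : nat :=
  \sum_(i < N | (i < m)%N) (w i : nat).

Definition estimate {R : realType} (p : R) (n0 N : nat) (w : {ffun 'I_N -> bool}) (m : nat) : R :=
  n0%:R + (samples w m)%:R / p.

(* Bad event, restricted to the first N events of the round: some event count
   n = n0 + m with m <= N and n <= n0 + R - 1 (equivalently B_m < k, since the
   round ends exactly when B reaches k) has relative error |n - nhat|/n > eps. *)
Definition bad_event {R : realType} (k : nat) (eps p : R) (n0 N : nat)
    (w : {ffun 'I_N -> bool}) : bool :=
  [exists m : 'I_N.+1,
     (samples w m < k)%N &&
     (eps < `|(n0 + m)%:R - estimate p n0 w m| / (n0 + m)%:R)].

Definition prob_bad {R : realType} (k : nat) (eps c : R) (n0 N : nat) : R :=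
  let p := round_p k eps c n0 in
  \sum_(w : {ffun 'I_N -> bool} | bad_event k eps p n0 w) coin_weight p w.

From HB Require Import structures.
From mathcomp Require Import all_boot all_order all_algebra.
From mathcomp Require Import reals sequences exp.
From mathcomp Require Import ring lra.
Import Order.TTheory GRing.Theory Num.Theory.
Local Open Scope ring_scope.
Set Implicit Arguments. Unset Strict Implicit. Unset Printing Implicit Defensive.

(* When p = 1 the server sees every event and the estimate is exact.  Otherwise
   p eps n0 = c sqrt k =: s, and a bad event at m events into the round (with
   B_m < k samples) forces |p m - B_m| > s.  For lambda >= p (e^theta - 1) the
   process exp (theta B_m - lambda m) is a supermartingale under i.i.d.
   Bernoulli(p) coins, so by Ville's maximal inequality it ever exceeds e^A with
   probability at most e^-A.  Taking theta ~ -s / (k + s) for the lower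
   deviation and theta = s / (4 k) for the upper one, and using B_m < k to bound
   the quadratic correction, each side has probability at most
   exp (- min (c^2 / 8, s / 4)). *)

Lemma ler_sum_subset (R : numDomainType) (T : finType) (P Q : pred T) (F : T -> R) :
  (forall x, 0 <= F x) -> (forall x, P x -> Q x) ->
  \sum_(x | P x) F x <= \sum_(x | Q x) F x.
Proof.
move=> F0 PQ; rewrite (big_mkcond P) (big_mkcond Q) ler_sum // => x _.
by case: (boolP (P x)) => [/PQ Qx | _]; rewrite ?Qx //; case: ifP.
Qed.

Lemma ler_sum_predU (R : numDomainType) (T : finType) (P Q1 Q2 : pred T) (F : T -> R) :
  (forall x, 0 <= F x) -> (forall x, P x -> Q1 x || Q2 x) ->
  \sum_(x | P x) F x <= \sum_(x | Q1 x) F x + \sum_(x | Q2 x) F x.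
Proof.
move=> F0 PQ; rewrite (big_mkcond P) (big_mkcond Q1) (big_mkcond Q2) -big_split.
rewrite ler_sum // => x _.
have := F0 x; case: (boolP (P x)) => [/PQ | _] /=.
  by case: (Q1 x); case: (Q2 x) => //= _ Fx0; rewrite ?addr0 ?add0r // lerDl.
by case: (Q1 x); case: (Q2 x) => //= Fx0; rewrite ?addr0 // addr_ge0.
Qed.

Section CoinWeight.
Variables (R : realType) (p : R) (N : nat).
Local Notation coins := {ffun 'I_N -> bool}.
Local Notation bern b := (if b then p else 1 - p).

Definition flip (j : 'I_N) (w : coins) : coins :=
  [ffun i => if i == j then ~~ w i else w i].

Lemma flipK j : involutive (flip j).
Proof. by move=> w; apply/ffunP => i; rewrite !ffunE; case: (i == j); rewrite ?negbK. Qed.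

Lemma flip_at j w : flip j w j = ~~ w j.
Proof. by rewrite ffunE eqxx. Qed.

Lemma flip_off j w i : i != j -> flip j w i = w i.
Proof. by rewrite ffunE => /negbTE ->. Qed.

Definition coin_weight_off (j : 'I_N) (w : coins) : R := \prod_(i < N | i != j) bern (w i).

Lemma coin_weight_split j w : coin_weight p w = bern (w j) * coin_weight_off j w.
Proof. exact: bigD1. Qed.

Lemma coin_weight_off_flip j w : coin_weight_off j (flip j w) = coin_weight_off j w.
Proof. by apply: eq_bigr => i ij; rewrite flip_off. Qed.

Lemma sum_coin_weight : \sum_(w : coins) coin_weight p w = 1.
Proof.
rewrite /coin_weight -(bigA_distr_bigA (fun _ (b : bool) => bern b)).
by rewrite big1 // => i _; rewrite big_bool /= subrKC.
Qed.

Lemma sum_coin_weight_cond j (F : coins -> R) :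
  \sum_(w : coins) coin_weight p w * F w =
  \sum_(w : coins | w j) coin_weight_off j w * (p * F w + (1 - p) * F (flip j w)).
Proof.
rewrite (bigID (fun w : coins => w j)) /= [X in _ + X](reindex_inj (inv_inj (flipK j))) /=.
rewrite [X in _ + X](eq_bigl (fun w : coins => w j)) => [|w]; last by rewrite flip_at negbK.
rewrite -big_split; apply: eq_bigr => w wj /=.
rewrite !(coin_weight_split j) coin_weight_off_flip flip_at wj /=; ring.
Qed.

Hypothesis p01 : 0 <= p <= 1.

Lemma coin_weight_ge0 (w : coins) : 0 <= coin_weight p w.
Proof. by case/andP: p01 => p0 p1; apply: prodr_ge0 => i _; case: (w i); rewrite ?subr_ge0. Qed.

Lemma coin_weight_off_ge0 j (w : coins) : 0 <= coin_weight_off j w.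
Proof. by case/andP: p01 => p0 p1; apply: prodr_ge0 => i _; case: (w i); rewrite ?subr_ge0. Qed.

End CoinWeight.

Section Samples.
Variables (N : nat) (w : {ffun 'I_N -> bool}).

Lemma samples0 : samples w 0 = 0%N.
Proof. exact: big_pred0. Qed.

Lemma samplesS j (lt_jN : (j < N)%N) : samples w j.+1 = (samples w j + w (Ordinal lt_jN))%N.
Proof.
rewrite /samples (bigD1 (Ordinal lt_jN)) //= addnC; congr (_ + _)%N.
by apply: eq_bigl => i; rewrite ltnS leq_eqVlt -val_eqE /=; case: ltngtP.
Qed.

Lemma samples_flip (j : 'I_N) m : (m <= j)%N -> samples (flip j w) m = samples w m.
Proof.
move=> le_mj; apply: eq_bigr => i lt_im; rewrite flip_off // -val_eqE /=.
by rewrite neq_ltn (leq_trans lt_im le_mj).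
Qed.

Lemma samples_all m : [forall i, w i] -> (m <= N)%N -> samples w m = m.
Proof.
move=> /forallP wT; elim: m => [|m IH lt_mN]; first by rewrite samples0.
by rewrite samplesS IH ?(ltnW lt_mN) // wT addn1.
Qed.

End Samples.

Section Ville.
Variables (R : realType) (p theta lambda A : R) (N : nat).
Hypotheses (p01 : 0 <= p <= 1) (lambda_ge : p * (expR theta - 1) <= lambda).
Local Notation coins := {ffun 'I_N -> bool}.

Definition walk (w : coins) (m : nat) : R := theta * (samples w m)%:R - lambda * m%:R.

Definition crossed (j : nat) (w : coins) : bool :=
  [exists m : 'I_N.+1, (m <= j)%N && (A <= walk w m)].

(* The supermartingale [expR (walk - A)], frozen at 1 once it has reached 1. *)
Definition stopped (j : nat) (w : coins) : R :=
  if crossed j w then 1 else expR (walk w j - A).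

Lemma walk_flip (j : 'I_N) w m : (m <= j)%N -> walk (flip j w) m = walk w m.
Proof. by move=> le_mj; rewrite /walk samples_flip. Qed.

Lemma crossed_flip (j : 'I_N) w : crossed j (flip j w) = crossed j w.
Proof. by apply: eq_existsb => m; case: (boolP (m <= j)%N) => //= le_mj; rewrite walk_flip. Qed.

Lemma stopped_flip (j : 'I_N) w : stopped j (flip j w) = stopped j w.
Proof. by rewrite /stopped crossed_flip walk_flip. Qed.

Lemma walkS w j (lt_jN : (j < N)%N) :
  walk w j.+1 = walk w j + ((if w (Ordinal lt_jN) then theta else 0) - lambda).
Proof. by rewrite /walk samplesS natrD -addn1 natrD; case: (w _); rewrite /=; ring. Qed.

Lemma stoppedS_le w j :
  stopped j.+1 w <= if crossed j w then 1 else expR (walk w j.+1 - A).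
Proof.
rewrite /stopped; case: ifP => crossed_Sj; case: ifP => crossed_j //.
  have [m /andP[le_mSj Am]] := existsP crossed_Sj.
  have m_eq : nat_of_ord m = j.+1.
    apply/eqP; rewrite eqn_leq le_mSj ltnNge; apply: contraFN crossed_j => le_mj.
    by apply/existsP; exists m; rewrite le_mj.
  by rewrite -m_eq -expR0 ler_expR subr_ge0.
case/existsP: crossed_j => m /andP[le_mj Am].
by move/existsP: crossed_Sj; case; exists m; rewrite Am (leqW le_mj).
Qed.

Lemma walk_mgf_le1 : p * expR (theta - lambda) + (1 - p) * expR (- lambda) <= 1.
Proof.
have -> : p * expR (theta - lambda) + (1 - p) * expR (- lambda) =
          (1 + p * (expR theta - 1)) * expR (- lambda) by rewrite expRD; ring.
rewrite -[leRHS](expRxMexpNx_1 lambda) ler_pM2r ?expR_gt0 //.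
by apply: le_trans (expR_ge1Dx lambda); rewrite lerD2l.
Qed.

Lemma stopped_step j (lt_jN : (j < N)%N) (w : coins) : w (Ordinal lt_jN) ->
  p * stopped j.+1 w + (1 - p) * stopped j.+1 (flip (Ordinal lt_jN) w) <= stopped j w.
Proof.
move=> wj; have [p0 p1] := andP p01; have q0 : 0 <= 1 - p by rewrite subr_ge0.
have := stoppedS_le w j; have := stoppedS_le (flip (Ordinal lt_jN) w) j.
rewrite (crossed_flip (Ordinal lt_jN)) !(walkS _ lt_jN) flip_at wj.
rewrite (@walk_flip (Ordinal lt_jN)) //= /stopped.
case: (crossed j w) => le_flip le_w.
  have := ler_wpM2l p0 le_w; have := ler_wpM2l q0 le_flip; lra.
apply: le_trans (lerD (ler_wpM2l p0 le_w) (ler_wpM2l q0 le_flip)) _.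
have shift x : expR (walk w j + x - A) = expR (walk w j - A) * expR x.
  by rewrite -expRD; congr expR; ring.
rewrite !shift add0r mulrCA [X in _ + X]mulrCA -mulrDr.
by rewrite -[leRHS]mulr1 ler_pM2l ?expR_gt0 // walk_mgf_le1.
Qed.

Lemma expected_stopped_le j : (j <= N)%N ->
  \sum_(w : coins) coin_weight p w * stopped j w <= expR (- A).
Proof.
elim: j => [_ | j IH lt_jN].
  rewrite -[leRHS]mul1r -(sum_coin_weight p N) mulr_suml ler_sum // => w _.
  apply: ler_wpM2l; first exact: coin_weight_ge0.
  rewrite /stopped; case: ifP => [/existsP[m /andP[]] | _].
    rewrite leqn0 => /eqP m0; rewrite /walk m0 samples0 !mulr0 subrr => A_le0.
    by rewrite -expR0 ler_expR; lra.
  by rewrite /walk samples0 !mulr0 subrr sub0r.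
apply: le_trans (IH (ltnW lt_jN)).
rewrite !(sum_coin_weight_cond _ (Ordinal lt_jN)) ler_sum // => w wj.
apply: ler_wpM2l; first exact: coin_weight_off_ge0.
by rewrite (stopped_flip (Ordinal lt_jN)) -mulrDl subrKC mul1r stopped_step.
Qed.

Lemma ville_walk :
  \sum_(w : coins | [exists m : 'I_N.+1, A <= walk w m]) coin_weight p w <= expR (- A).
Proof.
apply: le_trans (expected_stopped_le (leqnn N)).
rewrite big_mkcond ler_sum // => w _; case: ifP => [crossed_w | _].
  rewrite /stopped ifT ?mulr1 //.
  by case/existsP: crossed_w => m Am; apply/existsP; exists m; rewrite Am -ltnS ltn_ord.
by rewrite mulr_ge0 ?coin_weight_ge0 // /stopped; case: ifP => // _; exact: expR_ge0.
Qed.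

End Ville.

Lemma expRN_le_quad (R : realType) (t : R) : 0 <= t -> expR (- t) <= 1 - t + 5 / 8 * t ^+ 2.
Proof.
move=> t0; set P := 1 - t + 5 / 8 * t ^+ 2.
have P0 : 0 <= P by rewrite /P; nra.
(* The constant 5/8 (instead of 1/2) lets [e^t >= (1 + t/4)^4] suffice. *)
have exp_ge : (1 + t / 4) ^+ 4 <= expR t.
  have -> : expR t = expR (t / 4) ^+ 4 by rewrite -expRM_natl; congr expR; field.
  by rewrite lerXn2r ?nnegrE ?expR_ge0 ?expR_ge1Dx //; lra.
rewrite expRN -[leLHS]div1r ler_pdivrMr ?expR_gt0 //.
apply: le_trans (ler_wpM2l P0 exp_ge).
have -> : P * (1 + t / 4) ^+ 4 =
          1 + t ^+ 3 * (5 / 16 + 45 / 256 * t + 9 / 256 * t ^+ 2 + 5 / 2048 * t ^+ 3).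
  by rewrite /P; field.
rewrite lerDl mulr_ge0 ?exprn_ge0 //.
have := exprn_ge0 2 t0; have := exprn_ge0 3 t0; lra.
Qed.

Lemma expR_le_quad (R : realType) (t : R) : 0 <= t <= 1 / 2 -> expR t <= 1 + t + 2 * t ^+ 2.
Proof.
case/andP=> t0 t1; set P := 1 + t + 2 * t ^+ 2.
have P0 : 0 <= P by rewrite /P; nra.
(* [e^t <= 1 / (1 - t)] and [P (1 - t) = 1 + t^2 (1 - 2 t) >= 1]. *)
rewrite -[t]opprK expRN -[leLHS]div1r ler_pdivrMr ?expR_gt0 //.
apply: le_trans (ler_wpM2l P0 (expR_ge1Dx (- t))); rewrite /P; nra.
Qed.

Section DeviationTails.
Variables (R : realType) (p K s : R) (N : nat).
Hypothesis p01 : 0 <= p <= 1.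
Local Notation coins := {ffun 'I_N -> bool}.
Local Notation B w m := ((samples w m)%:R : R).

Definition deviates_below (w : coins) : bool :=
  [exists m : 'I_N.+1, (B w m < K) && (s < p * m%:R - B w m)].

Definition deviates_above (w : coins) : bool :=
  [exists m : 'I_N.+1, (B w m < K) && (s < B w m - p * m%:R)].

Lemma deviates_below_tail t G : 0 <= G <= t -> expR (- t) <= 1 - t + G ->
  \sum_(w | deviates_below w) coin_weight p w <= expR (- ((t - G) * s - G * K)).
Proof.
case/andP=> G0 le_Gt exp_le; have [p0 _] := andP p01.
have lambda_ge : p * (expR (- t) - 1) <= p * (G - t) by rewrite ler_wpM2l //; lra.
apply: le_trans (ville_walk ((t - G) * s - G * K) N p01 lambda_ge).
apply: ler_sum_subset => [w | w /existsP[m /andP[BK dev]]]; first exact: coin_weight_ge0.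
apply/existsP; exists m; rewrite /walk.
(* The walk equals [(t - G) (p m - B) - G B]. *)
have tG0 : 0 <= t - G by lra.
have dev0 : 0 <= p * m%:R - B w m - s by lra.
have KB0 : 0 <= K - B w m by lra.
have := mulr_ge0 tG0 dev0; have := mulr_ge0 G0 KB0; lra.
Qed.

Lemma deviates_above_tail t H : 0 <= t -> 0 <= H -> expR t <= 1 + t + H -> 0 <= s ->
  \sum_(w | deviates_above w) coin_weight p w <= expR (- (t * s - H * K)).
Proof.
move=> t0 H0 exp_le s0; have [p0 _] := andP p01.
have lambda_ge : p * (expR t - 1) <= p * (t + H) by rewrite ler_wpM2l //; lra.
apply: le_trans (ville_walk (t * s - H * K) N p01 lambda_ge).
apply: ler_sum_subset => [w | w /existsP[m /andP[BK dev]]]; first exact: coin_weight_ge0.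
apply/existsP; exists m; rewrite /walk.
(* The walk equals [t (B - p m) - H p m], and [p m < B < K]. *)
have dev0 : 0 <= B w m - p * m%:R - s by lra.
have Kpm0 : 0 <= K - p * m%:R by lra.
have := mulr_ge0 t0 dev0; have := mulr_ge0 H0 Kpm0; lra.
Qed.

End DeviationTails.

Section TailBounds.
Variables (R : realType) (p K s : R) (N : nat).
Hypothesis p01 : 0 <= p <= 1.

Lemma deviates_below_bound : 0 < K -> 0 < s ->
  \sum_(w : {ffun 'I_N -> bool} | deviates_below p K s w) coin_weight p w <=
  expR (- (2 * s ^+ 2 / (5 * (K + s)))).
Proof.
move=> K_gt0 s_gt0; set t := 4 * s / (5 * (K + s)).
have t0 : 0 <= t by rewrite divr_ge0 //; lra.
have t_le : t <= 4 / 5 by rewrite ler_pdivrMr; lra.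
have G_le : 5 / 8 * t ^+ 2 <= t.
  have : 0 <= t * (1 - 5 / 8 * t) by apply: mulr_ge0 => //; lra.
  by rewrite expr2; lra.
apply: le_trans (deviates_below_tail _ _ _ p01 _ (expRN_le_quad t0)) _.
  by rewrite G_le andbT; have := exprn_ge0 2 t0; lra.
suff -> : (t - 5 / 8 * t ^+ 2) * s - 5 / 8 * t ^+ 2 * K = 2 * s ^+ 2 / (5 * (K + s)) by [].
by rewrite /t; field; lra.
Qed.

Lemma deviates_above_bound : 0 < K -> 0 < s ->
  \sum_(w : {ffun 'I_N -> bool} | deviates_above p K s w) coin_weight p w <=
  expR (- (s ^+ 2 / (8 * K))).
Proof.
move=> K_gt0 s_gt0; have [p0 _] := andP p01.
have [le_Ks | lt_sK] := lerP K s.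
  rewrite big_pred0 ?expR_ge0 // => w; apply/existsP => -[m /andP[BK dev]].
  have : 0 <= p * m%:R by rewrite mulr_ge0 ?ler0n.
  lra.
set t := s / (4 * K).
have t01 : 0 <= t <= 1 / 2 by rewrite divr_ge0 ?ler_pdivrMr /=; lra.
have [t0 _] := andP t01.
apply: le_trans (deviates_above_tail _ _ p01 t0 _ (expR_le_quad t01) (ltW s_gt0)) _.
  by have := exprn_ge0 2 t0; lra.
suff -> : t * s - 2 * t ^+ 2 * K = s ^+ 2 / (8 * K) by [].
by rewrite /t; field; lra.
Qed.

End TailBounds.

Lemma sum_bad_event_p1 (R : realType) k (eps : R) n0 N : 0 <= eps ->
  \sum_(w : {ffun 'I_N -> bool} | bad_event k eps 1 n0 w) coin_weight (1 : R) w = 0.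
Proof.
move=> eps0; apply: big1 => w; case: (boolP [forall i, w i]) => [w_all | /forallPn[i wi] _].
  case/existsP=> m /andP[_]; have le_mN : (m <= N)%N by rewrite -ltnS ltn_ord.
  by rewrite /estimate samples_all // divr1 natrD subrr normr0 mul0r; lra.
by rewrite (coin_weight_split _ i) (negbTE wi) subrr mul0r.
Qed.

Lemma bad_event_deviates (R : realType) k (eps p : R) n0 N (w : {ffun 'I_N -> bool}) :
  0 < p -> 0 <= eps -> (0 < n0)%N -> bad_event k eps p n0 w ->
  deviates_below p k%:R (p * eps * n0%:R) w || deviates_above p k%:R (p * eps * n0%:R) w.
Proof.
move=> p_gt0 eps0 n0_gt0 /existsP[m /andP[Bk err]].
set B : R := (samples w m)%:R; set M : R := m%:R.
have M0 : 0 <= M by rewrite ler0n.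
have n0M_gt0 : 0 < n0%:R + M by rewrite ltr_wpDr // ltr0n.
have dev : p * eps * n0%:R < `|p * M - B|.
  move: err; rewrite /estimate natrD ltr_pdivlMr // -/B -/M.
  have -> : n0%:R + M - (n0%:R + B / p) = (p * M - B) / p by field; rewrite gt_eqF.
  rewrite normrM normfV (gtr0_norm p_gt0) ltr_pdivlMr // => err.
  apply: le_lt_trans err; have := mulr_ge0 (mulr_ge0 (ltW p_gt0) eps0) M0; lra.
have Bk' : B < k%:R by rewrite ltr_nat.
move: dev; rewrite ltr_normr => /orP[dev | dev].
  by apply/orP; left; apply/existsP; exists m; rewrite Bk'.
by apply/orP; right; apply/existsP; exists m; rewrite Bk' /= opprB in dev *.
Qed.

Section RoundProbability.
Variables (R : realType) (k : nat) (eps c : R) (n0 : nat).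

Lemma round_p_le1 : round_p k eps c n0 <= 1.
Proof. by rewrite /round_p; case: eqP => // _; rewrite ge_min lexx. Qed.

Lemma round_p_gt0 : (0 < k)%N -> 0 < eps -> 0 < c -> 0 < round_p k eps c n0.
Proof.
move=> k_gt0 eps_gt0 c_gt0; rewrite /round_p; case: eqP => // /eqP.
by rewrite -lt0n => n0_gt0; rewrite lt_min ltr01 divr_gt0 ?mulr_gt0 ?sqrtr_gt0 ?ltr0n.
Qed.

Lemma round_p_lt1 : 0 < eps -> round_p k eps c n0 < 1 ->
  (0 < n0)%N /\ round_p k eps c n0 * eps * n0%:R = c * Num.sqrt k%:R.
Proof.
move=> eps_gt0; rewrite /round_p; case: eqP => [_ | /eqP n0_neq0]; first by rewrite ltxx.
rewrite lt0n n0_neq0 gt_min ltxx /= => lt_1; rewrite (min_idPr (ltW lt_1)).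
by split => //; field; rewrite pnatr_eq0 n0_neq0 gt_eqF.
Qed.

End RoundProbability.

Lemma min_le_lower_exponent (R : realType) (K s : R) : 0 < K -> 0 < s ->
  Num.min (s ^+ 2 / (8 * K)) (s / 4) <= 2 * s ^+ 2 / (5 * (K + s)).
Proof.
move=> K_gt0 s_gt0; rewrite ge_min; have [le_s2K | lt_2Ks] := lerP s (2 * K).
  apply/orP; left; rewrite -subr_ge0.
  have -> : 2 * s ^+ 2 / (5 * (K + s)) - s ^+ 2 / (8 * K) =
            s ^+ 2 * (11 * K - 5 * s) / (40 * K * (K + s)) by field; lra.
  by rewrite divr_ge0 ?mulr_ge0 ?exprn_ge0 ?ltW //; lra.
apply/orP; right; rewrite -subr_ge0.
have -> : 2 * s ^+ 2 / (5 * (K + s)) - s / 4 = s * (3 * s - 5 * K) / (20 * (K + s))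
  by field; lra.
by rewrite divr_ge0 ?mulr_ge0 ?ltW //; lra.
Qed.

Theorem mainTheorem8 (R : realType) (k : nat) (eps c : R) (n0 N : nat) :
  (0 < k)%N -> 0 < eps -> 1 <= c ->
  prob_bad k eps c n0 N <=
    2 * expR (- Num.min (c ^+ 2 / 8) (c * Num.sqrt (k%:R) / 4)).
Proof.
move=> k_gt0 eps_gt0 c_ge1; rewrite /prob_bad /=; set p := round_p k eps c n0.
have p_gt0 : 0 < p by apply: round_p_gt0 => //; lra.
have p01 : 0 <= p <= 1 by rewrite ltW //= round_p_le1.
have [p_lt1 | p_ge1] := ltrP p 1; last first.
  have -> : p = 1 by apply/eqP; rewrite eq_le round_p_le1.
  by rewrite sum_bad_event_p1 ?mulr_ge0 ?expR_ge0 ?ltW.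
have [n0_gt0 s_eq] := round_p_lt1 eps_gt0 p_lt1.
set K : R := k%:R; set s := c * Num.sqrt K.
have K_gt0 : 0 < K by rewrite ltr0n.
have s_gt0 : 0 < s by rewrite mulr_gt0 ?sqrtr_gt0 //; lra.
have c2_eq : c ^+ 2 / 8 = s ^+ 2 / (8 * K) by rewrite exprMn sqr_sqrtr ?ltW //; field; lra.
apply: le_trans (ler_sum_predU (coin_weight_ge0 p01)
  (fun w => bad_event_deviates p_gt0 (ltW eps_gt0) n0_gt0)) _.
rewrite s_eq mulr_natl mulr2n.
apply: le_trans (lerD (deviates_below_bound N p01 K_gt0 s_gt0)
                      (deviates_above_bound N p01 K_gt0 s_gt0)) _.
by rewrite lerD // ler_expR lerN2 c2_eq ?min_le_lower_exponent // ge_min lexx.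
Qed.
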